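(* Let $\mathfrak R$ be an iterated graph system satisfying (GR1)–(GR3), with replacement graphs $G_m$. Let $w=w_1\cdots w_m$ and $v=v_1\cdots v_m$ be distinct words in $W_m$ and $k:=|w\wedge v|$. Then $(w,v)\in E(G_m)$ if and only if $(w_k,v_k)\in E(G_1)$ and $(w_i,v_i)\in I_{\mathfrak t(w_k,v_k)}$ for all $k<i\le m$. Furthermore, if $\{w,v\}\in E(G_m)$, then $\mathfrak t(w,v)=\mathfrak t(w_k,v_k)$.
   Context: A graph is a pair $(V,E)$ with $V$ finite non-empty and $E\subseteq V\times V$ such that $(x,y)\in E$ implies $(y,x)\notin E$; write $\{x,y\}\in E$ if $(x,y)\in E$ or $(y,x)\in E$, and the type of an unordered edge is the type of whichever ordered pair lies in the edge set. An iterated graph system (IGS) consists of a connected graph $G_1=(S,E)$, a finite set $\mathcal T$ of types, a surjective typing function $\mathfrak t:E\to\mathcal T$, and for each $t\in\mathcal T$ a non-empty set $I_t\subseteq S\times S$. Let $W_m=S^m$, $[w]_k=w_1\cdots w_k$, and for distinct words $w,v$ of the same length $|w\wedge v|=\min\{k:[w]_k\ne[v]_k\}$. The replacement graphs $G_m=(W_m,E_m)$ with typings (denoted $\mathfrak t$ at every level) are defined recursively: $G_1$ given; $(w,v)\in E_{m+1}$ iff either (1) $[w]_m=[v]_m$ and $(w_{m+1},v_{m+1})\in E$, with type $\mathfrak t(w_{m+1},v_{m+1})$; or (2) $([w]_m,[v]_m)\in E_m$ and $(w_{m+1},v_{m+1})\in I_{\mathfrak t([w]_m,[v]_m)}$,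 with type $\mathfrak t([w]_m,[v]_m)$. Let $I_{t,+}=\{w:(w,v)\in I_t\text{ for some }v\}$, $I_{t,-}=\{v:(w,v)\in I_t\text{ for some }w\}$, $\mathfrak b_t^+(w)=|\{v:(w,v)\in I_t\}|$, $\mathfrak b_t^-(w)=|\{v:(v,w)\in I_t\}|$, $\deg_t^+(w)=|\{v:(w,v)\in E\text{ of type }t\}|$, $\deg_t^-(w)=|\{v:(v,w)\in E\text{ of type }t\}|$. (GR1): $\mathfrak b_t^\star(w)\in\{0,1\}$ for all $t,\star,w$; (GR2): $\mathfrak b_t^\star(w)$ and $\deg_t^\star(w)$ are never simultaneously non-zero; (GR3): $I_{t,-}\cap I_{t,+}=\emptyset$ for all $t$. *)

From mathcomp Require Import all_boot.
Set Implicit Arguments. Unset Strict Implicit. Unset Printing Implicit Defensive.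

Section IGS.
Variables (S T : finType) (E : rel S) (tp : S -> S -> T) (I : T -> rel S).

Definition is_graph : Prop := forall x y, E x y -> ~~ E y x.

Definition sym_edge : rel S := fun x y => E x y || E y x.
Definition connected_graph : Prop := forall x y, connect sym_edge x y.

(* tp is the typing function; only its values on edges matter.
   Surjectivity of the typing E -> T: *)
Definition typing_surj : Prop := forall t, exists x y, E x y /\ tp x y = t.

Definition I_nonempty : Prop := forall t, exists x y, I t x y.

Definition is_IGS : Prop :=
  [/\ is_graph, connected_graph, typing_surj & I_nonempty].

Definition bplus (t : T) (w : S) : nat := #|[pred v | I t w v]|.
Definition bminus (t : T) (w : S) : nat := #|[pred v | I t v w]|.
Definition degplus (t : T) (w : S) : nat := #|[pred v | E w v && (tp w v == t)]|.
Definition degminus (t : T) (w : S) : nat := #|[pred v | E v w && (tp v w == t)]|.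

Definition GR1 : Prop := forall t w, bplus t w <= 1 /\ bminus t w <= 1.
Definition GR2 : Prop := forall t w,
  ~ (bplus t w != 0 /\ degplus t w != 0) /\ ~ (bminus t w != 0 /\ degminus t w != 0).
(* I_{t,+} = {w | exists v, (w,v) in I_t}, I_{t,-} = {v | exists w, (w,v) in I_t} *)
Definition GR3 : Prop := forall t x,
  ~ ((exists w, I t w x) /\ (exists v, I t x v)).

(* Replacement graphs: words of length m are sequences of size m.
   [gedge m w v] is [Some t] iff (w,v) in E_m with type t, and [None] if
   (w,v) is not an edge of G_m.  Words are decomposed as w = rcons p a,
   i.e. p = [w]_m and a = w_{m+1}. *)
Fixpoint gedge (m : nat) (w v : seq S) : option T :=
  match m with
  | 0 => None
  | m'.+1 =>
    if m' == 0 then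
      (match w, v with
       | [:: a], [:: b] => if E a b then Some (tp a b) else None
       | _, _ => None end)
    else
      (match rev w, rev v with
       | a :: rw, b :: rv =>
         let p := rev rw in let q := rev rv in
         if (p == q) && E a b then Some (tp a b)
         else match gedge m' p q with
              | Some t => if I t a b then Some t else None
              | None => None end
       | _, _ => None end)
  end.

Definition is_edge (m : nat) (w v : seq S) : bool := gedge m w v != None.

Definition utype (x y : S) : T := if E x y then tp x y else tp y x.

(* 0-based index of the first position where w and v differ; the paper's
   |w ^ v| is this index + 1. *)
Definition first_diff (w v : seq S) : nat :=
  find (fun p : S * S => p.1 != p.2) (zip w v).

End IGS.

From mathcomp Require Import all_boot.
Set Implicit Arguments. Unset Strict Implicit. Unset Printing Implicit Defensive.

(* Write w = p a and v = q b with letters a, b.  If p = q, only rule (1) can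
   make (w, v) an edge of G_(m+1) (rule (2) would need the loop (p, p) in G_m),
   and the first difference is the last letter.  If p <> q, only rule (2)
   applies: the first difference of w and v is that of p and q, and the type
   is inherited from the edge (p, q).  So by induction on m, gedge agrees with
   the closed form [first_diff_edge], which reads the type off the first
   difference and checks all later letter pairs against I.  The type of the
   unordered edge follows because G_1 is antisymmetric. *)

Section FirstDiff.
Variable S : finType.
Implicit Types (p q w v : seq S) (a b : S).

Lemma first_diffC w v : first_diff w v = first_diff v w.
Proof. by rewrite /first_diff; elim: w v => [|x w IH] [|y v] //=; rewrite eq_sym IH. Qed.

Lemma first_diff_lt w v : size w = size v -> w != v -> first_diff w v < size w.
Proof.
rewrite /first_diff; elim: w v => [|x w IH] [|y v] //= [eq_size].
by case: (eqVneq x y) => [->|//]; rewrite eqseq_cons eqxx /= ltnS; apply: IH.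
Qed.

Lemma first_diff_rcons_eq p a b :
  a != b -> first_diff (rcons p a) (rcons p b) = size p.
Proof.
by rewrite /first_diff => neq_ab; elim: p => [|x p IH] /=; rewrite ?neq_ab ?eqxx ?IH.
Qed.

Lemma first_diff_rcons p q a b : size p = size q -> p != q ->
  first_diff (rcons p a) (rcons q b) = first_diff p q.
Proof.
rewrite /first_diff; elim: p q => [|x p IH] [|y q] //= [eq_size].
by case: (eqVneq x y) => [->|//]; rewrite eqseq_cons eqxx /= => neq_pq; rewrite IH.
Qed.

End FirstDiff.

Lemma all_drop_zipP (S : eqType) (r : rel S) (x0 : S) k (w v : seq S) :
  size w = size v ->
  reflect (forall i, k < i < size w -> r (nth x0 w i) (nth x0 v i))
          (all (fun c => r c.1 c.2) (drop k.+1 (zip w v))).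
Proof.
move=> eq_size; apply: (iffP (all_nthP (x0, x0))) => [Ih i /andP[lt_ki lt_iw] | Ih j].
  have := Ih (i - k.+1); rewrite nth_drop (subnKC lt_ki) nth_zip //.
  rewrite size_drop size_zip -eq_size minnn; apply.
  by rewrite ltn_sub2rE.
rewrite size_drop size_zip -eq_size minnn nth_drop nth_zip // ltn_subRL => lt_jw.
by apply: Ih; rewrite lt_jw ltnS leq_addr.
Qed.

Section ReplacementEdges.
Variables (S T : finType) (E : rel S) (tp : S -> S -> T) (I : T -> rel S).
Hypothesis graphE : is_graph E.
Local Notation gedge := (gedge E tp I).
Implicit Types (p q w v : seq S) (a b : S).

Lemma graph_irrefl a : E a a = false.
Proof. by apply/negP => Eaa; move: (graphE Eaa); rewrite Eaa. Qed.

Lemma gedge_rcons m p q a b : gedge m.+2 (rcons p a) (rcons q b) =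
  if (p == q) && E a b then Some (tp a b)
  else if gedge m.+1 p q is Some t then (if I t a b then Some t else None)
  else None.
Proof. by rewrite /= !rev_rcons !revK. Qed.

Lemma gedge_refl m w : gedge m w w = None.
Proof.
case: m => [//|m]; elim: m w => [|m IH] w.
  by case: w => [|a [|]] //=; rewrite graph_irrefl.
by case/lastP: w => [|p a] //; rewrite gedge_rcons graph_irrefl andbF IH.
Qed.

Definition first_diff_edge (x0 : S) w v : option T :=
  let a := nth x0 w (first_diff w v) in
  let b := nth x0 v (first_diff w v) in
  if E a b && all (fun c => I (tp a b) c.1 c.2) (drop (first_diff w v).+1 (zip w v))
  then Some (tp a b) else None.

Lemma first_diff_edge_rcons_eq x0 p a b : a != b ->
  first_diff_edge x0 (rcons p a) (rcons p b) = if E a b then Some (tp a b) else None.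
Proof.
move=> neq_ab; rewrite /first_diff_edge first_diff_rcons_eq // !nth_rcons ltnn eqxx.
by rewrite drop_oversize ?andbT // size_zip !size_rcons minnn.
Qed.

Lemma first_diff_edge_rcons x0 p q a b : size p = size q -> p != q ->
  first_diff_edge x0 (rcons p a) (rcons q b) =
  if first_diff_edge x0 p q is Some t then (if I t a b then Some t else None)
  else None.
Proof.
move=> eq_size neq_pq; have lt_kp := first_diff_lt eq_size neq_pq.
rewrite /first_diff_edge first_diff_rcons // !nth_rcons -eq_size lt_kp.
rewrite zip_rcons // drop_rcons ?size_zip -?eq_size ?minnn // all_rcons /=.
by case: (E _ _); case: (all _ _); rewrite /= ?andbF //; case: (I _ a b).
Qed.

Lemma gedgeE x0 m w v : size w = m.+1 -> size v = m.+1 -> w != v ->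
  gedge m.+1 w v = first_diff_edge x0 w v.
Proof.
elim: m w v => [|m IH] w v; case/lastP: w => [|p a] //; case/lastP: v => [|q b] //;
  rewrite !size_rcons => -[size_p] [size_q] neq_wv.
  rewrite (size0nil size_p) (size0nil size_q) in neq_wv *.
  by rewrite first_diff_edge_rcons_eq //; apply: contra neq_wv => /eqP->.
have eq_size : size p = size q by rewrite size_p size_q.
case: (eqVneq p q) => [eq_pq|neq_pq].
  rewrite -eq_pq in neq_wv *; rewrite gedge_rcons eqxx gedge_refl.
  by rewrite first_diff_edge_rcons_eq //; case: (E a b); apply: contra neq_wv => /eqP->.
by rewrite gedge_rcons (negbTE neq_pq) first_diff_edge_rcons // IH.
Qed.

End ReplacementEdges.

Theorem lemma3p7 (S T : finType) (E : rel S) (tp : S -> S -> T) (I : T -> rel S)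
  (hIGS : is_IGS E tp I) (h1 : GR1 I) (h2 : GR2 E tp I) (h3 : GR3 I)
  (x0 : S) (m : nat) (w v : seq S)
  (hw : size w = m) (hv : size v = m) (hwv : w != v) :
  let i0 := first_diff w v in
  let wk := nth x0 w i0 in
  let vk := nth x0 v i0 in
  (is_edge E tp I m w v <->
     (E wk vk /\
      forall i, i0 < i < m -> I (tp wk vk) (nth x0 w i) (nth x0 v i)))
  /\
  (forall t, (gedge E tp I m w v = Some t \/ gedge E tp I m v w = Some t) ->
     t = utype E tp wk vk).
Proof.
case: hIGS => graphE _ _ _.
case: m hw hv => [|m] hw hv; first by move: hwv; rewrite (size0nil hw) (size0nil hv).
have eq_size : size w = size v by rewrite hw hv.
have hvw : v != w by rewrite eq_sym.
move=> i0 wk vk; rewrite /is_edge (gedgeE tp I graphE x0 hw hv hwv).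
rewrite (gedgeE tp I graphE x0 hv hw hvw) /first_diff_edge (first_diffC v w) -/i0 -/wk -/vk.
split.
  rewrite -hw; case: (all_drop_zipP (I (tp wk vk)) x0 i0 eq_size); case: (E wk vk);
    by split=> // -[].
move=> t; rewrite /utype; case Ewkvk: (E wk vk) => /=.
  by rewrite (negbTE (graphE _ _ Ewkvk)) /=; case: (all _ _) => -[] // [->].
by case: (_ && _) => -[] // [->].
Qed.
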